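(* Let $\psi_{12}$ be the endomorphism of $\mathcal O_2$ defined by $\psi_{12}(s_1)=s_1s_2s_1^*+s_1s_1s_2^*$ and $\psi_{12}(s_2)=s_2$. For $J=(j_1,\dots,j_k)\in\{1,2\}^k$ ($k\ge1$) let $n_1(J)=\sum_{l=1}^k(2-j_l)$ (the number of entries equal to $1$). Then: if $n_1(J)$ is even, there are words $J_1,J_2$ over $\{1,2\}$ with $P(J)\circ\psi_{12}\cong P(J_1)\oplus P(J_2)$; if $n_1(J)$ is odd, there is a word $J_3$ over $\{1,2\}$ with $P(J)\circ\psi_{12}\cong P(J_3)$. Here $\cong$ is unitary equivalence.
   Context: $\mathcal O_2$ is the Cuntz algebra generated by $s_1,s_2$ with $s_i^*s_j=\delta_{ij}I$ and $s_1s_1^*+s_2s_2^*=I$; $s_J=s_{j_1}\cdots s_{j_k}$. A representation $(\mathcal H,\pi)$ of $\mathcal O_2$ is $P(J)$ if there is a unit cyclic vector $\Omega$ with $\pi(s_J)\Omega=\Omega$ and $\{\pi(s_{j_i}\cdots s_{j_k})\Omega\}_{i=1}^k$ orthonormal; such a representation is unique up to unitary equivalence and is denoted $P(J)$. $P(J)\circ\psi_{12}$ denotes the representation $\pi\circ\psi_{12}$. ($\psi_{12}=\psi_\sigma$ for the transposition $\sigma$ of $\{1,2\}^2$ exchanging $(1,1)$ and $(1,2)$.) *)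

From mathcomp Require Import all_boot all_algebra.
From mathcomp Require Import complex.
From mathcomp Require Import reals.
Set Implicit Arguments. Unset Strict Implicit. Unset Printing Implicit Defensive.
Import GRing.Theory Num.Theory.
Local Open Scope ring_scope.

Record hilbert (R : realType) := Hilbert {
  hcar :> lmodType R[i];
  hip : hcar -> hcar -> R[i];
  hip_linl : forall (a : R[i]) (x y z : hcar),
      hip (a *: x + y) z = a * hip x z + hip y z;
  hip_sym : forall x y : hcar, hip y x = (hip x y)^*%C;
  hip_ge0 : forall x : hcar, 0 <= hip x x;
  hip_def : forall x : hcar, hip x x = 0 -> x = 0;
  hip_complete : forall u : nat -> hcar,
      (forall e : R[i], 0 < e -> exists N : nat, forall m n : nat,
          (N <= m)%N -> (N <= n)%N -> sqrtC (hip (u m - u n) (u m - u n)) < e) ->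
      exists l : hcar, forall e : R[i], 0 < e -> exists N : nat, forall n : nat,
          (N <= n)%N -> sqrtC (hip (u n - l) (u n - l)) < e
}.

Section Cuntz.
Variable R : realType.

Definition hnorm (H : hilbert R) (x : H) : R[i] := sqrtC (hip x x).

(* Generators are indexed by 'I_2 : the index i stands for s_(i+1),
   i.e. ord0 <-> s_1 and 1 <-> s_2. *)
Definition lab (j : 'I_2) : nat := (nat_of_ord j).+1.

Definition n1 (J : seq 'I_2) : nat := \sum_(j <- J) (2 - lab j).

Definition is_rep (H : hilbert R) (S T : 'I_2 -> H -> H) : Prop :=
  [/\ (forall i x y, hip (S i x) y = hip x (T i y)),
      (forall i j x, T i (S j x) = if i == j then x else 0) &
      (forall x, S ord0 (T ord0 x) + S 1 (T 1 x) = x)].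

Definition act_word (H : hilbert R) (S : 'I_2 -> H -> H) (J : seq 'I_2) (x : H) : H :=
  foldr (fun j v => S j v) x J.

(* *-words: letters (i, false) = s_i, (i, true) = s_i^* ; they span a dense
   *-subalgebra of O_2. *)
Definition act_sword (H : hilbert R) (S T : 'I_2 -> H -> H)
    (w : seq ('I_2 * bool)) (x : H) : H :=
  foldr (fun l v => if l.2 then T l.1 v else S l.1 v) x w.

Definition cyclic_vec (H : hilbert R) (S T : 'I_2 -> H -> H) (Om : H) : Prop :=
  forall (x : H) (e : R[i]), 0 < e ->
    exists l : seq (R[i] * seq ('I_2 * bool)),
      hnorm (x - \sum_(p <- l) p.1 *: act_sword S T p.2 Om) < e.

Definition isP (J : seq 'I_2) (H : hilbert R) (S T : 'I_2 -> H -> H) : Prop :=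
  is_rep S T /\
  exists Om : H,
    [/\ hip Om Om = 1, cyclic_vec S T Om, act_word S J Om = Om &
        forall m n : nat, (m < size J)%N -> (n < size J)%N ->
          hip (act_word S (drop m J) Om) (act_word S (drop n J) Om)
            = (m == n)%:R].

(* pi o psi_12 : s_1 |-> S1 S2 T1 + S1 S1 T2, s_2 |-> S2, with adjoints. *)
Definition psi12S (H : hilbert R) (S T : 'I_2 -> H -> H) (i : 'I_2) (x : H) : H :=
  if i == ord0 then S ord0 (S 1 (T ord0 x)) + S ord0 (S ord0 (T 1 x)) else S 1 x.
Definition psi12T (H : hilbert R) (S T : 'I_2 -> H -> H) (i : 'I_2) (x : H) : H :=
  if i == ord0 then S ord0 (T 1 (T ord0 x)) + S 1 (T ord0 (T ord0 x)) else T 1 x.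

Definition unit_equiv (H H' : hilbert R) (S : 'I_2 -> H -> H) (S' : 'I_2 -> H' -> H') : Prop :=
  exists U : H' -> H,
    [/\ (forall (a : R[i]) x y, U (a *: x + y) = a *: U x + U y),
        (forall x y, hip (U x) (U y) = hip x y),
        (forall z, exists x, U x = z) &
        (forall i x, U (S' i x) = S i (U x))].

(* Unitary equivalence of (H, S) with the direct sum (H1,S1) (+) (H2,S2):
   a unitary U : H1 (+) H2 -> H, U (x, y) = V1 x + V2 y, intertwining. *)
Definition unit_equiv_sum (H H1 H2 : hilbert R) (S : 'I_2 -> H -> H)
    (S1 : 'I_2 -> H1 -> H1) (S2 : 'I_2 -> H2 -> H2) : Prop :=
  exists (V1 : H1 -> H) (V2 : H2 -> H),
    [/\ (forall (a : R[i]) x y, V1 (a *: x + y) = a *: V1 x + V1 y),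
        (forall (a : R[i]) x y, V2 (a *: x + y) = a *: V2 x + V2 y),
        (forall x y, hip (V1 x) (V1 y) = hip x y),
        (forall x y, hip (V2 x) (V2 y) = hip x y) &
        (forall x y, hip (V1 x) (V2 y) = 0)] /\
    [/\ (forall z, exists x y, V1 x + V2 y = z),
        (forall i x, V1 (S1 i x) = S i (V1 x)) &
        (forall i y, V2 (S2 i y) = S i (V2 y))].

End Cuntz.

(* Write u = s_2 s_1^* + s_1 s_2^*, a unitary of O_2 exchanging the first letters
   s_1, s_2 of a word; then psi_12(s_1) = s_1 u and psi_12(s_2) = s_2.  In P(J) with
   cyclic vector Omega put e_m = s_(j_(m+1)) ... s_(j_k) Omega (m mod k).  The vectors
   s_I e_m span H, and grading them by the parity of n_1(I) plus the number of 1s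
   among the first m letters of J J J ... is preserved by psi_12(s_i) and their
   adjoints.  Every nonzero vector of grade c is reached from u^c Omega, and reading
   the letters of the adjoint walk e_0, e_1, ... from u^c Omega produces a word
   whose vectors are orthonormal.  If n_1(J) is even, the walk closes after k steps
   and the grade is well defined on the orthonormal e_m, so H is the orthogonal sum
   of the two closed graded pieces, each a P(J_c).  If n_1(J) is odd, the walk from
   Omega passes through u Omega after k steps and closes after 2k, so H is a single
   P(J_3). *)

From HB Require Import structures.
From mathcomp Require Import all_boot all_order all_algebra.
From mathcomp Require Import complex reals.
From mathcomp Require Import zify ring lra.
From mathcomp Require boolp.
Set Implicit Arguments. Unset Strict Implicit. Unset Printing Implicit Defensive.
Import Order.TTheory GRing.Theory Num.Theory.
Local Open Scope ring_scope.

Section ComplexReals.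
Variable R : realType.

Lemma ge0_complexE (x : R[i]) : 0 <= x -> x = (complex.Re x)%:C%C.
Proof. by move=> x_ge0; rewrite [LHS]complexE (ger0_Im x_ge0) mulr0 addr0. Qed.

Lemma ge0_Re (x : R[i]) : 0 <= x -> 0 <= complex.Re x.
Proof. by move=> x_ge0; rewrite -lecR -ge0_complexE. Qed.

Lemma gt0_complexE (e : R[i]) : 0 < e -> exists2 r : R, 0 < r & e = r%:C%C.
Proof.
move=> e_gt0; exists (complex.Re e); last exact/ge0_complexE/ltW.
by rewrite -ltcR -ge0_complexE ?ltW.
Qed.

Lemma mulcJ_Re_eq0 (c : R[i]) : complex.Re (c * c^*%C) = 0 -> c = 0.
Proof.
move=> Re0; move: (ge0_complexE (mulcJ_ge0 c)); rewrite Re0 => /eqP.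
by rewrite mulf_eq0 conjc_eq0 orbb => /eqP.
Qed.

Lemma ge0_eq0_le_mul (a b : R) :
  0 <= a -> 0 <= b -> (forall eps, 0 < eps -> a <= eps * b) -> a = 0.
Proof.
move=> a_ge0 b_ge0 small; apply/eqP; rewrite eq_le a_ge0 andbT leNgt.
apply/negP => a_gt0; have q_gt0 : 0 < a / (b + 1) by rewrite divr_gt0 //; lra.
have := small _ q_gt0; have -> : a / (b + 1) * b = a - a / (b + 1) by field; lra.
lra.
Qed.

Definition inv_succ (n : nat) : R := (n.+1%:R)^-1.

Lemma inv_succ_gt0 n : 0 < inv_succ n.
Proof. by rewrite invr_gt0 ltr0Sn. Qed.

Lemma inv_succ_small (r : R) : 0 < r -> exists N, forall n, (N <= n)%N -> inv_succ n < r.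
Proof.
move=> r_gt0; exists (Num.bound r^-1) => n leNn.
rewrite /inv_succ -[r]invrK ltf_pV2 ?posrE ?invr_gt0 ?ltr0Sn //.
have rV_ge0 : 0 <= r^-1 by rewrite invr_ge0 ltW.
by apply: lt_le_trans (archi_boundP rV_ge0) _; rewrite ler_nat leqW.
Qed.

End ComplexReals.

Section InnerProduct.
Variables (R : realType) (H : hilbert R).
Implicit Types (x y z v : H) (a : R[i]).

Lemma hipDl x y z : hip (x + y) z = hip x z + hip y z.
Proof. by have := hip_linl 1 x y z; rewrite scale1r mul1r. Qed.

Lemma hip0l z : hip 0 z = 0.
Proof. by apply: (addrI (hip 0 z)); rewrite -hipDl !addr0. Qed.

Lemma hipZl a x z : hip (a *: x) z = a * hip x z.
Proof. by have := hip_linl a x 0 z; rewrite !addr0 hip0l addr0. Qed.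

Lemma hipNl x z : hip (- x) z = - hip x z.
Proof. by rewrite -scaleN1r hipZl mulN1r. Qed.

Lemma hipBl x y z : hip (x - y) z = hip x z - hip y z.
Proof. by rewrite hipDl hipNl. Qed.

Lemma hipDr x y z : hip x (y + z) = hip x y + hip x z.
Proof. by rewrite hip_sym hipDl rmorphD /= -!hip_sym. Qed.

Lemma hipZr a x y : hip x (a *: y) = a^*%C * hip x y.
Proof. by rewrite hip_sym hipZl rmorphM /= -hip_sym. Qed.

Lemma hip0r x : hip x 0 = 0.
Proof. by rewrite hip_sym hip0l conjc0. Qed.

Lemma hipNr x y : hip x (- y) = - hip x y.
Proof. by rewrite hip_sym hipNl rmorphN /= -hip_sym. Qed.

Lemma hipBr x y z : hip x (y - z) = hip x y - hip x z.
Proof. by rewrite hipDr hipNr. Qed.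

Lemma hip_eq0C x y : hip x y = 0 -> hip y x = 0.
Proof. by move=> xy0; rewrite hip_sym xy0 conjc0. Qed.

Lemma hip_inj x y : (forall z, hip x z = hip y z) -> x = y.
Proof.
move=> eq_xy; apply/eqP; rewrite -subr_eq0; apply/eqP/hip_def.
by rewrite hipBl eq_xy subrr.
Qed.

Definition sqnorm x : R := complex.Re (hip x x).

Lemma hip_sqnorm x : hip x x = (sqnorm x)%:C%C.
Proof. exact/ge0_complexE/hip_ge0. Qed.

Lemma sqnorm_ge0 x : 0 <= sqnorm x.
Proof. exact/ge0_Re/hip_ge0. Qed.

Lemma sqnormN x : sqnorm (- x) = sqnorm x.
Proof. by rewrite /sqnorm hipNl hipNr opprK. Qed.

Lemma sqnorm_eq0 x : sqnorm x = 0 -> x = 0.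
Proof. by move=> x0; apply: hip_def; rewrite hip_sqnorm x0. Qed.

Lemma sqnormD_orth x y : hip x y = 0 -> sqnorm (x + y) = sqnorm x + sqnorm y.
Proof.
move=> xy0; apply: (@complexI R); rewrite rmorphD /= -!hip_sqnorm.
by rewrite hipDl !hipDr xy0 (hip_eq0C xy0) addr0 add0r.
Qed.

Lemma sqnormD_le x y : sqnorm (x + y) <= 2 * (sqnorm x + sqnorm y).
Proof.
have : hip (x + y) (x + y) + hip (x - y) (x - y) = 2%:R * (hip x x + hip y y).
  by rewrite !hipDl !hipDr !hipNl !hipNr; ring.
rewrite !hip_sqnorm -!rmorphD -(rmorph_nat (real_complex R)) -rmorphM => /complexI.
by have := sqnorm_ge0 (x - y); lra.
Qed.

Lemma hip_CauchySchwarz x y :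
  complex.Re (hip x y * (hip x y)^*%C) <= sqnorm x * sqnorm y.
Proof.
set c := hip x y; have c_ge0 := ge0_Re (mulcJ_ge0 c).
have [y0|y_neq0] := eqVneq (sqnorm y) 0.
  by rewrite y0 mulr0 /c (sqnorm_eq0 y0) hip0r mul0r.
have y_gt0 : 0 < sqnorm y by rewrite lt_def y_neq0 sqnorm_ge0.
have := hip_ge0 (hip y y *: x - c *: y).
have -> : hip (hip y y *: x - c *: y) (hip y y *: x - c *: y) =
          hip y y * (hip y y * hip x x - c * c^*%C).
  have yyJ : (hip y y)^*%C = hip y y by rewrite -hip_sym.
  by rewrite !hipBl !hipBr !hipZl !hipZr yyJ -/c (hip_sym x y) -/c; ring.
rewrite {1}(ge0_complexE (mulcJ_ge0 c)) !hip_sqnorm -!rmorphM -rmorphB -rmorphM.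
by rewrite lecR pmulr_rge0 // subr_ge0 [sqnorm y * _]mulrC.
Qed.

End InnerProduct.

Section Convergence.
Variables (R : realType) (H : hilbert R).
Implicit Types (x y v : H) (u : nat -> H).

Lemma hnorm_ltE x (r : R) : 0 < r -> (hnorm x < r%:C%C) = (sqnorm x < r ^+ 2).
Proof.
move=> r_gt0; have -> : r%:C%C = sqrtC ((r ^+ 2)%:C%C) :> R[i].
  by rewrite rmorphXn /= sqrCK // ler0c ltW.
rewrite /hnorm hip_sqnorm ltr_sqrtC ?nnegrE ?ler0c ?sqnorm_ge0 ?exprn_ge0 ?ltW //.
by rewrite ltcR.
Qed.

Lemma hnorm_lt_sqrtE x (r : R) : 0 < r -> (hnorm x < (Num.sqrt r)%:C%C) = (sqnorm x < r).
Proof. by move=> r_gt0; rewrite hnorm_ltE ?sqrtr_gt0 // sqr_sqrtr ?ltW. Qed.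

Lemma sqrt_complex_gt0 (r : R) : 0 < r -> 0 < (Num.sqrt r)%:C%C :> R[i].
Proof. by move=> r_gt0; rewrite ltcR sqrtr_gt0. Qed.

Definition hlim u l := forall e : R[i], 0 < e ->
  exists N, forall n, (N <= n)%N -> hnorm (u n - l) < e.

Lemma hlim_sqnorm u l : hlim u l ->
  forall r : R, 0 < r -> exists N, forall n, (N <= n)%N -> sqnorm (u n - l) < r.
Proof.
move=> ul r r_gt0; have [N closeN] := ul _ (sqrt_complex_gt0 r_gt0).
by exists N => n leNn; rewrite -hnorm_lt_sqrtE ?closeN.
Qed.

Lemma hilbert_complete u :
  (forall r : R, 0 < r -> exists N, forall m n, (N <= m)%N -> (N <= n)%N ->
     sqnorm (u m - u n) < r) -> exists l, hlim u l.
Proof.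
move=> cauchy; apply: hip_complete => _ /gt0_complexE[r r_gt0 ->].
have [N closeN] := cauchy _ (exprn_gt0 2 r_gt0).
by exists N => m n leNm leNn; rewrite hnorm_ltE ?closeN.
Qed.

Lemma hilbert_complete_inv u :
  (forall m n, sqnorm (u m - u n) < 2 * (inv_succ R m + inv_succ R n)) ->
  exists l, hlim u l.
Proof.
move=> bound; apply: hilbert_complete => r r_gt0.
have r4_gt0 : 0 < r / 4%:R by rewrite divr_gt0.
have [N small] := inv_succ_small r4_gt0.
exists N => m n leNm leNn.
by have := bound m n; have := small _ leNm; have := small _ leNn; lra.
Qed.

Lemma hip_eq0_closed x v :
  (forall eps : R, 0 < eps -> exists2 y, hip y v = 0 & sqnorm (x - y) < eps) ->
  hip x v = 0.
Proof.
move=> approx; apply: mulcJ_Re_eq0.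
apply: (ge0_eq0_le_mul (ge0_Re (mulcJ_ge0 _)) (sqnorm_ge0 v)) => eps eps_gt0.
have [y yv0 close_xy] := approx _ eps_gt0.
have -> : hip x v = hip (x - y) v by rewrite hipBl yv0 subr0.
apply: le_trans (hip_CauchySchwarz _ _) _.
by rewrite ler_wpM2r ?sqnorm_ge0 ?ltW.
Qed.

End Convergence.

Section OrthogonalDecomposition.
Variables (R : realType) (H : hilbert R) (A : bool -> H -> Prop).
Implicit Types (x y z v : H) (c : bool).

Inductive span c : H -> Prop :=
| span0 : span c 0
| span_step a u v : A c u -> span c v -> span c (a *: u + v).

(* Under the hypotheses below, [orthc c], the orthogonal complement of [A (~~ c)],
   is the closed span of [A c]. *)
Definition orthc c x := forall v, A (~~ c) v -> hip x v = 0.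

Lemma orthc0 c : orthc c 0.
Proof. by move=> v _; rewrite hip0l. Qed.

Lemma orthcZD c a x y : orthc c x -> orthc c y -> orthc c (a *: x + y).
Proof. by move=> xc yc v Av; rewrite hip_linl xc // yc // mulr0 addr0. Qed.

Lemma spanZD c a x y : span c x -> span c y -> span c (a *: x + y).
Proof.
move=> sx sy; elim: sx => [|b u v Au _ IH]; first by rewrite scaler0 add0r.
by rewrite scalerDr scalerA -addrA; apply: span_step.
Qed.

Lemma spanB c x y : span c x -> span c y -> span c (x - y).
Proof. by move=> sx sy; rewrite addrC -scaleN1r; apply: spanZD. Qed.

Lemma orthc_span c x b : orthc c x -> span (~~ c) b -> hip x b = 0.
Proof.
move=> xc; elim=> [|a u v Au _ IH]; first by rewrite hip0r.
by rewrite hipDr hipZr xc // IH mulr0 addr0.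
Qed.

Lemma orthc_closed c u l : (forall n, orthc c (u n)) -> hlim u l -> orthc c l.
Proof.
move=> uc ul v Av; apply: hip_eq0_closed => eps eps_gt0.
have [N closeN] := hlim_sqnorm ul eps_gt0.
by exists (u N); [exact: uc | rewrite -sqnormN opprB closeN].
Qed.

Hypothesis A_orth : forall c u v, A c u -> A (~~ c) v -> hip u v = 0.

Lemma span_orthc c x : span c x -> orthc c x.
Proof.
elim=> [|a u v Au _ IH]; first exact: orthc0.
by apply: orthcZD IH => w Aw; apply: A_orth Au Aw.
Qed.

Hypothesis span_dense : forall z (r : R), 0 < r ->
  exists a b, [/\ span false a, span true b & sqnorm (z - (a + b)) < r].

(* The approximant of [x] in the other class is orthogonal to [x], so it can only
   increase the error. *)
Lemma span_approx c x (r : R) : orthc c x -> 0 < r ->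
  exists2 a, span c a & sqnorm (x - a) < r.
Proof.
move=> xc r_gt0; have [a0 [b0 [sa0 sb0 close]]] := span_dense x r_gt0.
have [a [b [sa sb eq_ab]]] : exists a b, [/\ span c a, span (~~ c) b & a0 + b0 = a + b].
  by clear xc; case: c; [exists b0, a0; rewrite addrC | exists a0, b0].
have ab_orth : hip (x - a) (- b) = 0.
  by rewrite hipNr hipBl (orthc_span xc sb) (orthc_span (span_orthc sa) sb) subrr oppr0.
exists a => //; move: close; rewrite eq_ab opprD addrA (sqnormD_orth ab_orth) sqnormN.
by have := sqnorm_ge0 b; lra.
Qed.

Lemma orthc_orth x y : orthc false x -> orthc true y -> hip x y = 0.
Proof.
move=> xc yc; apply: hip_eq0C; apply: hip_eq0_closed => eps eps_gt0.
have [b sb close] := span_approx yc eps_gt0.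
by exists b => //; apply/hip_eq0C/(orthc_span xc).
Qed.

Lemma orthc_decomp z : exists x y, [/\ orthc false x, orthc true y & x + y = z].
Proof.
have /boolp.choice[ab approx] : forall n, exists p : H * H,
    [/\ span false p.1, span true p.2 & sqnorm (z - (p.1 + p.2)) < inv_succ R n].
  move=> n; have [a [b [sa sb close]]] := span_dense z (inv_succ_gt0 R n).
  by exists (a, b).
pose a n := (ab n).1; pose b n := (ab n).2.
have bound_ab m n :
    sqnorm (a m - a n) + sqnorm (b m - b n) < 2 * (inv_succ R m + inv_succ R n).
  have [sam sbm closem] := approx m; have [san sbn closen] := approx n.
  rewrite -sqnormD_orth; last exact: orthc_span (span_orthc (spanB sam san)) (spanB sbm sbn).
  have -> : a m - a n + (b m - b n) = (z - (a n + b n)) - (z - (a m + b m)).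
    by rewrite [in RHS]opprB [in RHS]addrC [in RHS]addrA subrK opprD addrACA.
  by have := sqnormD_le (z - (a n + b n)) (- (z - (a m + b m))); rewrite sqnormN; lra.
have [x ax] : exists x, hlim a x.
  apply: hilbert_complete_inv => m n.
  by have := bound_ab m n; have := sqnorm_ge0 (b m - b n); lra.
have [y bx] : exists y, hlim b y.
  apply: hilbert_complete_inv => m n.
  by have := bound_ab m n; have := sqnorm_ge0 (a m - a n); lra.
exists x, y; split.
- by apply: orthc_closed ax => n; case: (approx n) => /span_orthc.
- by apply: orthc_closed bx => n; case: (approx n) => _ /span_orthc.
apply/esym/eqP; rewrite -subr_eq0; apply/eqP/sqnorm_eq0.
apply: (ge0_eq0_le_mul (sqnorm_ge0 _) ler01) => eps eps_gt0.
have eps10_gt0 : 0 < eps / 10%:R by rewrite divr_gt0.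
have [N1 small1] := inv_succ_small eps10_gt0.
have [N2 small2] := hlim_sqnorm ax eps10_gt0.
have [N3 small3] := hlim_sqnorm bx eps10_gt0.
pose n := (N1 + N2 + N3)%N; have [_ _ closen] := approx n.
have -> : z - (x + y) = (z - (a n + b n)) + ((a n - x) + (b n - y)).
  by rewrite [(a n - x) + _]addrACA -opprD addrA subrK.
have := sqnormD_le (z - (a n + b n)) (a n - x + (b n - y)).
have := sqnormD_le (a n - x) (b n - y).
have := small1 n (leq_trans (leq_addr N2 N1) (leq_addr N3 _)).
have := small2 n (leq_trans (leq_addl N1 N2) (leq_addr N3 _)).
have := small3 n (leq_addl _ N3).
lra.
Qed.

End OrthogonalDecomposition.

Lemma cyclic_vec_sqnorm (R : realType) (H : hilbert R) (S T : 'I_2 -> H -> H) (Om : H) :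
  cyclic_vec S T Om <->
  forall x (r : R), 0 < r ->
    exists l, sqnorm (x - \sum_(p <- l) p.1 *: act_sword S T p.2 Om) < r.
Proof.
split=> [cyc x r r_gt0 | approx x _ /gt0_complexE[r r_gt0 ->]].
  have [l close] := cyc x _ (sqrt_complex_gt0 r_gt0).
  by exists l; rewrite -hnorm_lt_sqrtE.
have [l close] := approx x _ (exprn_gt0 2 r_gt0).
by exists l; rewrite hnorm_ltE.
Qed.

Record closed_subspace (R : realType) (H : hilbert R) := ClosedSubspace {
  csub :> H -> Prop;
  csub0 : csub 0;
  csubZD : forall a x y, csub x -> csub y -> csub (a *: x + y);
  csub_closed : forall u l, (forall n, csub (u n)) -> hlim u l -> csub l
}.

Section ClosedSubspace.
Variables (R : realType) (H : hilbert R) (P : closed_subspace H).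

Definition mem_subspace : pred H := fun x => boolp.asbool (P x).

Lemma mem_subspaceP x : reflect (P x) (x \in mem_subspace).
Proof. exact: boolp.asboolP. Qed.

Lemma mem_subspace_submod_closed : submod_closed mem_subspace.
Proof.
split; first exact/mem_subspaceP/csub0.
by move=> a x y /mem_subspaceP Px /mem_subspaceP Py; apply/mem_subspaceP/csubZD.
Qed.

HB.instance Definition _ := GRing.isSubmodClosed.Build R[i] H mem_subspace
  (GRing.submod_closed_semi mem_subspace_submod_closed).

Definition subspace_type := {x : H | x \in mem_subspace}.
HB.instance Definition _ := [isSub of subspace_type for @sval H (fun x => x \in mem_subspace)].
HB.instance Definition _ := [Choice of subspace_type by <:].
HB.instance Definition _ := [SubChoice_isSubZmodule of subspace_type by <:].
HB.instance Definition _ := [SubZmodule_isSubLmodule of subspace_type by <:].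

Definition subspace_elt x (Px : P x) : subspace_type :=
  exist _ x (introT (mem_subspaceP x) Px).

Definition sub_hip (x y : subspace_type) := hip (val x) (val y).

Lemma sub_hip_complete (u : nat -> subspace_type) :
  (forall e : R[i], 0 < e -> exists N, forall m n, (N <= m)%N -> (N <= n)%N ->
      sqrtC (sub_hip (u m - u n) (u m - u n)) < e) ->
  exists l, forall e : R[i], 0 < e -> exists N, forall n, (N <= n)%N ->
      sqrtC (sub_hip (u n - l) (u n - l)) < e.
Proof.
move=> /(@hip_complete R H (val \o u))[l ul].
have Pl : P l by apply: csub_closed ul => n; exact/mem_subspaceP/valP.
by exists (subspace_elt Pl).
Qed.

Lemma sub_hip_def (x : subspace_type) : sub_hip x x = 0 -> x = 0.
Proof. by move/hip_def => x0; apply: val_inj; rewrite x0. Qed.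

Definition subspace : hilbert R :=
  @Hilbert R subspace_type sub_hip (fun a x y z => hip_linl a (val x) (val y) (val z))
    (fun x y => hip_sym (val x) (val y)) (fun x => hip_ge0 (val x))
    sub_hip_def sub_hip_complete.

Lemma subspace_valP (x : subspace) : P (val x).
Proof. exact/mem_subspaceP/valP. Qed.

Variables (S T : 'I_2 -> H -> H).
Hypotheses (rep : is_rep S T) (PS : forall i x, P x -> P (S i x))
  (PT : forall i x, P x -> P (T i x)).

Definition subS i (x : subspace) : subspace := subspace_elt (PS i (subspace_valP x)).
Definition subT i (x : subspace) : subspace := subspace_elt (PT i (subspace_valP x)).

Lemma is_rep_sub : is_rep subS subT.
Proof.
case: rep => adj TS cover; split=> [i x y|i j x|x]; first exact: adj.
  by apply: val_inj; rewrite /= TS; case: eqP.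
by apply: val_inj; apply: cover.
Qed.

Lemma isP_sub J (Om : H) (POm : P Om) :
  hip Om Om = 1 -> act_word S J Om = Om ->
  (forall m n, (m < size J)%N -> (n < size J)%N ->
     hip (act_word S (drop m J) Om) (act_word S (drop n J) Om) = (m == n)%:R) ->
  (forall x, P x -> forall r : R, 0 < r -> exists l,
     sqnorm (x - \sum_(p <- l) p.1 *: act_sword S T p.2 Om) < r) ->
  isP J subS subT.
Proof.
move=> Om1 JOm orthJ approx.
have val_word w (x : subspace) : val (act_word subS w x) = act_word S w (val x).
  by elim: w => //= i w ->.
have val_sword w (x : subspace) : val (act_sword subS subT w x) = act_sword S T w (val x).
  by elim: w => [|[i []] w IH] //=; rewrite IH.
split; first exact: is_rep_sub.
exists (subspace_elt POm); split=> //.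
- apply/cyclic_vec_sqnorm => x r r_gt0.
  have [l close] := approx _ (subspace_valP x) _ r_gt0.
  exists l; rewrite /sqnorm /= /sub_hip /=.
  suff -> : sval (\sum_(p <- l) p.1 *: act_sword subS subT p.2 (subspace_elt POm)) =
            \sum_(p <- l) p.1 *: act_sword S T p.2 Om by exact: close.
  elim: l {close} => [|p l IH]; first by rewrite !big_nil.
  by rewrite !big_cons -IH /= val_sword.
- by apply: val_inj; rewrite val_word.
- by move=> m n ltm ltn; rewrite /= /sub_hip !val_word; exact: orthJ.
Qed.

End ClosedSubspace.

Lemma ord2P (i : 'I_2) : i = ord0 \/ i = 1.
Proof. by case: i => [[|[|n]] ltn2]; [left; apply: val_inj | right; apply: val_inj |]. Qed.

Lemma eq_mod_lt_double k m n : (m < k + k)%N -> (n < k + k)%N -> (m %% k = n %% k)%N ->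
  m <> n -> (n = m + k)%N \/ (m = n + k)%N.
Proof.
move=> ltm ltn eq_mod neq_mn.
have [ltmk|lekm] := ltnP m k; have [ltnk|lekn] := ltnP n k.
- by move: eq_mod; rewrite !modn_small.
- by left; move: eq_mod; rewrite (modn_small ltmk) -(subnK lekn) modnDr modn_small; lia.
- by right; move: eq_mod; rewrite (modn_small ltnk) -(subnK lekm) modnDr modn_small; lia.
- by move: eq_mod; rewrite -(subnK lekm) -(subnK lekn) !modnDr !modn_small; lia.
Qed.

Definition flip (j : 'I_2) : 'I_2 := if j == ord0 then 1 else ord0.

Lemma flip_eq0 j : (flip j == ord0) = (j != ord0).
Proof. by case: (ord2P j) => ->. Qed.

Lemma flip_neq j : (flip j == j) = false.
Proof. by case: (ord2P j) => ->. Qed.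

Lemma odd_n1_cons a I : odd (n1 (a :: I)) = (a == ord0) (+) odd (n1 I).
Proof. by rewrite /n1 big_cons oddD; case: (ord2P a) => ->. Qed.

Lemma odd_n1_rcons I a : odd (n1 (rcons I a)) = odd (n1 I) (+) (a == ord0).
Proof. by rewrite -cats1 /n1 big_cat big_seq1 oddD; case: (ord2P a) => ->. Qed.

Lemma act_sword_cat (R : realType) (H : hilbert R) (S T : 'I_2 -> H -> H) w w' x :
  act_sword S T (w ++ w') x = act_sword S T w (act_sword S T w' x).
Proof. exact: foldr_cat. Qed.

Section Psi12.
Variables (R : realType) (H : hilbert R) (S T : 'I_2 -> H -> H).
Hypothesis rep : is_rep S T.
Implicit Types (x y : H) (i j : 'I_2).

Lemma adjS i x y : hip (S i x) y = hip x (T i y).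
Proof. by case: rep. Qed.

Lemma adjT i x y : hip (T i x) y = hip x (S i y).
Proof. by rewrite hip_sym -adjS -hip_sym. Qed.

Lemma TS i j x : T i (S j x) = if i == j then x else 0.
Proof. by case: rep. Qed.

Lemma ST_cover x : S ord0 (T ord0 x) + S 1 (T 1 x) = x.
Proof. by case: rep. Qed.

Lemma hip_SS i j x y : hip (S i x) (S j y) = if i == j then hip x y else 0.
Proof. by rewrite adjS TS; case: eqP; rewrite ?hip0r. Qed.

Lemma S0 i : S i 0 = 0.
Proof. by apply: hip_inj => z; rewrite adjS !hip0l. Qed.

Lemma T0 i : T i 0 = 0.
Proof. by apply: hip_inj => z; rewrite adjT !hip0l. Qed.

Lemma SD i x y : S i (x + y) = S i x + S i y.
Proof. by apply: hip_inj => z; rewrite hipDl !adjS hipDl. Qed.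

Lemma TD i x y : T i (x + y) = T i x + T i y.
Proof. by apply: hip_inj => z; rewrite hipDl !adjT hipDl. Qed.

(* [swap] is the image of u = s_2 s_1^* + s_1 s_2^*, and psi_12(s_1) = s_1 u. *)
Definition swap x := S 1 (T ord0 x) + S ord0 (T 1 x).

Lemma swapS a y : swap (S a y) = S (flip a) y.
Proof. by rewrite /swap !TS; case: (ord2P a) => ->; rewrite /= ?S0 ?addr0 ?add0r. Qed.

Lemma swapK : involutive swap.
Proof. by move=> x; rewrite /swap !TD !TS /= ?T0 ?S0 !addr0 !add0r addrC ST_cover. Qed.

Lemma swap0 : swap 0 = 0.
Proof. by rewrite /swap !T0 !S0 addr0. Qed.

Lemma swap_adj x y : hip (swap x) y = hip x (swap y).
Proof. by rewrite /swap hipDl hipDr !adjS !adjT addrC. Qed.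

Lemma psi12S0 x : psi12S S T ord0 x = S ord0 (swap x).
Proof. by rewrite /psi12S eqxx SD. Qed.

Lemma psi12T0 x : psi12T S T ord0 x = swap (T ord0 x).
Proof. by rewrite /psi12T eqxx addrC. Qed.

Lemma psi12S1 x : psi12S S T 1 x = S 1 x.
Proof. by []. Qed.

Lemma psi12T1 x : psi12T S T 1 x = T 1 x.
Proof. by []. Qed.

Lemma is_rep_psi12 : is_rep (psi12S S T) (psi12T S T).
Proof.
split=> [i x y|i j x|x].
- case: (ord2P i) => ->; last by rewrite psi12S1 psi12T1 adjS.
  by rewrite psi12S0 psi12T0 adjS swap_adj.
- case: (ord2P i) => ->; case: (ord2P j) => ->.
  + by rewrite psi12S0 psi12T0 TS swapK.
  + by rewrite psi12S1 psi12T0 TS swap0.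
  + by rewrite psi12S0 psi12T1 TS.
  + by rewrite psi12S1 psi12T1 TS.
- by rewrite psi12S0 psi12T0 swapK psi12S1 psi12T1 ST_cover.
Qed.

End Psi12.

Section PsiOfP.
Variables (R : realType) (H : hilbert R) (S T : 'I_2 -> H -> H) (J : seq 'I_2) (Om : H).
Hypotheses (rep : is_rep S T) (J_gt0 : (0 < size J)%N) (JOm : act_word S J Om = Om)
  (orthJ : forall m n, (m < size J)%N -> (n < size J)%N ->
     hip (act_word S (drop m J) Om) (act_word S (drop n J) Om) = (m == n)%:R).
Implicit Types (x v : H) (c : bool) (I : seq 'I_2).

Local Notation k := (size J).
Local Notation pS := (psi12S S T).
Local Notation pT := (psi12T S T).
Local Notation swap := (swap S T).
Let hip_SS := hip_SS rep.
Let TS := TS rep.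
Let S0 := S0 rep.
Let T0 := T0 rep.
Let swapS := swapS rep.
Let swapK := swapK rep.
Let swap0 := swap0 rep.
Let psi12S0 := psi12S0 rep.

Definition letter m := nth ord0 J (m %% k).
Definition ev m := act_word S (drop (m %% k) J) Om.
Definition wvec I m := act_word S I (ev m).

Fixpoint par n := if n is n'.+1 then par n' (+) (letter n' == ord0) else false.
Definition grade I m := odd (n1 I) (+) par m.

Definition swap_if (b : bool) x := if b then swap x else x.
Definition seed c := swap_if c Om.
Definition reach c v := exists w, v = act_sword pS pT w (seed c).
Definition graded c v := v = 0 \/ exists I m, v = wvec I m /\ grade I m = c.

Lemma ev0 : ev 0 = Om.
Proof. by rewrite /ev mod0n drop0. Qed.

Lemma ev_step m : ev m = S (letter m) (ev m.+1).
Proof.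
rewrite /ev /letter (drop_nth ord0) ?ltn_pmod //=.
have -> : (m.+1 %% k = (m %% k).+1 %% k)%N by rewrite -addn1 -modnDml addn1.
have [->|lt_mk] := eqVneq (m %% k).+1 k; first by rewrite modnn drop_size drop0 JOm.
by rewrite (modn_small (m := (m %% k).+1)) // ltn_neqAle lt_mk ltn_pmod.
Qed.

Lemma hip_ev m n : hip (ev m) (ev n) = (m %% k == n %% k)%N%:R.
Proof. by rewrite /ev orthJ ?ltn_pmod. Qed.

Lemma par_take l : (l <= k)%N -> par l = odd (n1 (take l J)).
Proof.
elim: l => [|l IH] lt_lk; first by rewrite take0 /n1 big_nil.
by rewrite /= (IH (ltnW lt_lk)) (take_nth ord0 lt_lk) odd_n1_rcons /letter modn_small.
Qed.

Lemma par_addk n : par (n + k) = par n (+) odd (n1 J).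
Proof.
elim: n => [|n IH]; first by rewrite add0n par_take // take_size.
by rewrite addSn /= IH /letter modnDr addbAC.
Qed.

Lemma grade_cons a I m : grade (a :: I) m = (a == ord0) (+) grade I m.
Proof. by rewrite /grade odd_n1_cons addbA. Qed.

Lemma grade_nil m : grade [::] m = grade [:: letter m] m.+1.
Proof.
by rewrite grade_cons /grade /=; case: (letter m == ord0) (par m) (odd _) => [] [] [].
Qed.

Lemma graded_S c a v : graded c v -> graded ((a == ord0) (+) c) (S a v).
Proof.
case=> [->|[I [m [-> <-]]]]; first by left; rewrite S0.
by right; exists (a :: I), m; rewrite grade_cons.
Qed.

Lemma graded_cons c v : graded c v ->
  v = 0 \/ exists a I m, v = wvec (a :: I) m /\ grade (a :: I) m = c.
Proof.
case=> [->|[[|a I] [m [-> <-]]]]; [by left | right | by right; exists a, I, m].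
by exists (letter m), [::], m.+1; rewrite /wvec /= -ev_step grade_nil.
Qed.

Lemma graded_T c a v : graded c v -> graded ((a == ord0) (+) c) (T a v).
Proof.
move/graded_cons=> [->|[b [I [m [-> <-]]]]]; first by left; rewrite T0.
rewrite /wvec /= TS; have [<-|_] := eqVneq a b; last by left.
by right; exists I, m; rewrite grade_cons addbA addbb.
Qed.

Lemma graded_swap c v : graded c v -> graded (~~ c) (swap v).
Proof.
move/graded_cons=> [->|[b [I [m [-> <-]]]]]; first by left; rewrite swap0.
right; exists (flip b :: I), m; rewrite /wvec /= swapS.
by rewrite !grade_cons flip_eq0 addNb.
Qed.

Lemma graded_pS c i v : graded c v -> graded c (pS i v).
Proof.
move=> gv; case: (ord2P i) => ->; last by have := graded_S 1 gv.
by rewrite psi12S0; have := graded_S ord0 (graded_swap gv); rewrite addTb negbK.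
Qed.

Lemma graded_pT c i v : graded c v -> graded c (pT i v).
Proof.
move=> gv; case: (ord2P i) => ->; last by have := graded_T 1 gv.
by rewrite psi12T0; have := graded_swap (graded_T ord0 gv); rewrite addTb negbK.
Qed.

Lemma graded_Om : graded false Om.
Proof. by right; exists [::], 0%N; rewrite /wvec /grade /n1 big_nil /= ev0. Qed.

Lemma reach_graded c v : reach c v -> graded c v.
Proof.
case=> w ->; elim: w => [|[i []] w IH] /=; last exact: graded_pS.
  by case: c; [apply: graded_swap graded_Om | apply: graded_Om].
exact: graded_pT.
Qed.

Lemma sword_graded w : exists c, graded c (act_sword S T w Om).
Proof.
elim: w => [|[i []] w [c IH]] /=; first by exists false; exact: graded_Om.
  by eexists; apply: graded_T IH.
by eexists; apply: graded_S IH.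
Qed.

Lemma reach_pS c i v : reach c v -> reach c (pS i v).
Proof. by case=> w ->; exists ((i, false) :: w). Qed.

Lemma reach_pT c i v : reach c v -> reach c (pT i v).
Proof. by case=> w ->; exists ((i, true) :: w). Qed.

(* The periodic word read by psi_12 from the seed [c]. *)
Definition pletter c n := if c (+) par n then flip (letter n) else letter n.
Definition cyc c n := swap_if (c (+) par n) (ev n).
Definition pword c L := mkseq (pletter c) L.

Lemma cyc_step c n : cyc c n = S (pletter c n) (ev n.+1).
Proof. by rewrite /cyc /pletter {1}ev_step; case: (c (+) par n); rewrite //= swapS. Qed.

Lemma par_pletter c n : c (+) par n.+1 = (pletter c n == ord0).
Proof. by rewrite /= /pletter addbA; case: (c (+) par n); rewrite ?flip_eq0. Qed.

Lemma pS_cyc c n : pS (pletter c n) (cyc c n.+1) = cyc c n.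
Proof.
rewrite [RHS]cyc_step /cyc par_pletter.
by case: (ord2P (pletter c n)) => ->; rewrite ?psi12S0 ?swapK.
Qed.

Lemma pT_cyc c n : pT (pletter c n) (cyc c n) = cyc c n.+1.
Proof.
rewrite cyc_step /cyc par_pletter.
by case: (ord2P (pletter c n)) => ->; rewrite ?psi12T0 ?psi12T1 TS eqxx.
Qed.

Lemma reach_cyc c n : reach c (cyc c n).
Proof.
elim: n => [|n IH]; first by exists [::]; rewrite /cyc addbF ev0.
by rewrite -pT_cyc; apply: reach_pT.
Qed.

Lemma reach_wvec I m f : reach (grade I m (+) f) (swap_if f (wvec I m)).
Proof.
elim: I f => [|a I IH] f.
  have := reach_cyc (f (+) par m) m.
  by rewrite /cyc -addbA addbb addbF /grade /wvec /n1 big_nil /= addbC.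
have -> : swap_if f (wvec (a :: I) m) = S (if f then flip a else a) (wvec I m).
  by case: f; rewrite /wvec //= swapS.
have flipE : ((if f then flip a else a) == ord0) = (a == ord0) (+) f.
  by case: f; rewrite ?flip_eq0 ?addbT ?addbF.
rewrite grade_cons addbAC addbC -flipE.
case: (ord2P (if f then flip a else a)) => ->.
  by have := reach_pS ord0 (IH true); rewrite /= psi12S0 swapK.
by have := reach_pS 1 (IH false).
Qed.

Lemma graded_reach c v : graded c v -> v = 0 \/ reach c v.
Proof.
case=> [->|[I [m [-> <-]]]]; first by left.
by right; have := reach_wvec I m false; rewrite addbF.
Qed.


Lemma cyc0 c : cyc c 0 = seed c.
Proof. by rewrite /cyc addbF ev0. Qed.

Lemma cyc_addk c n : cyc c (n + k) = cyc (c (+) odd (n1 J)) n.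
Proof. by rewrite /cyc par_addk /ev modnDr addbAC addbA. Qed.

Lemma pletter_addk c n : pletter c (n + k) = pletter (c (+) odd (n1 J)) n.
Proof. by rewrite /pletter par_addk /letter modnDr addbAC addbA. Qed.

Lemma pletterN c n : pletter (~~ c) n = flip (pletter c n).
Proof.
by rewrite /pletter addNb; case: (c (+) par n) => //=; case: (ord2P (letter n)) => ->.
Qed.

Lemma hip_cyc c m n :
  hip (cyc c m) (cyc c n) = ((pletter c m == pletter c n) && (m %% k == n %% k)%N)%:R.
Proof.
rewrite !cyc_step hip_SS; case: eqP => _ //=.
by rewrite hip_ev -addn1 -[n.+1]addn1 eqn_modDr.
Qed.

Lemma act_pword_drop c L n : (n <= L)%N ->
  act_word pS (drop n (pword c L)) (cyc c L) = cyc c n.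
Proof.
move=> le_nL; rewrite -(subKn le_nL).
elim: (L - n)%N (leq_subr n L) => [|d IH] le_dL.
  by rewrite subn0 drop_oversize ?size_mkseq.
have lt_L : (L - d.+1 < L)%N by lia.
rewrite (drop_nth ord0) ?size_mkseq // nth_mkseq //= (subnSK le_dL) (IH (ltnW le_dL)).
by rewrite -(subnSK le_dL) pS_cyc.
Qed.

Lemma pword_orbit c L : (0 < L)%N -> cyc c L = seed c ->
  (forall m n, (m < L)%N -> (n < L)%N -> hip (cyc c m) (cyc c n) = (m == n)%:R) ->
  [/\ hip (seed c) (seed c) = 1, act_word pS (pword c L) (seed c) = seed c &
      forall m n, (m < size (pword c L))%N -> (n < size (pword c L))%N ->
        hip (act_word pS (drop m (pword c L)) (seed c))
            (act_word pS (drop n (pword c L)) (seed c)) = (m == n)%:R].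
Proof.
move=> L_gt0 cycL orth; rewrite size_mkseq -cycL; split.
- by rewrite cycL -cyc0 orth.
- by rewrite -[pword c L]drop0 act_pword_drop // cyc0.
- by move=> m n ltm ltn; rewrite !act_pword_drop ?orth // ltnW.
Qed.

Lemma orth_cyc_even c m n : ~~ odd (n1 J) -> (m < k)%N -> (n < k)%N ->
  hip (cyc c m) (cyc c n) = (m == n)%:R.
Proof.
move=> even ltm ltn; rewrite hip_cyc !modn_small //.
by case: (eqVneq m n) => [->|]; rewrite ?eqxx ?andbF.
Qed.

(* For odd n_1(J) the two vectors of the double cycle above the same e_m differ in
   their first letter. *)
Lemma orth_cyc_odd m n : odd (n1 J) -> (m < k + k)%N -> (n < k + k)%N ->
  hip (cyc false m) (cyc false n) = (m == n)%:R.
Proof.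
move=> odd_J ltm ltn; rewrite hip_cyc.
have [->|neq_mn] := eqVneq m n; first by rewrite !eqxx.
have [eq_mod|] := eqVneq (m %% k)%N (n %% k)%N; last by rewrite andbF.
have flip_k a : (pletter false a == pletter false (a + k)) = false.
  by rewrite pletter_addk odd_J -[false (+) true]/(~~ false) pletterN eq_sym flip_neq.
by case: (eq_mod_lt_double ltm ltn eq_mod (elimN eqP neq_mn)) => ->;
  rewrite ?flip_k // eq_sym flip_k.
Qed.

Lemma reach_true_false v : odd (n1 J) -> reach true v -> reach false v.
Proof.
move=> odd_J [w ->]; have [w0 seed_true] := reach_cyc false (0 + k).
rewrite cyc_addk odd_J cyc0 /= in seed_true.
by exists (w ++ w0); rewrite act_sword_cat -seed_true.
Qed.

Lemma span_reach_true_false v : odd (n1 J) -> span reach true v -> span reach false v.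
Proof.
move=> odd_J; elim=> [|a u w ru _ IH]; first exact: span0.
by apply: span_step IH; apply: reach_true_false.
Qed.

Lemma span_reach_sum c v : span reach c v ->
  exists l, v = \sum_(p <- l) p.1 *: act_sword pS pT p.2 (seed c).
Proof.
elim=> [|a u y [w ->] _ [l ->]]; first by exists [::]; rewrite big_nil.
by exists ((a, w) :: l); rewrite big_cons.
Qed.

Lemma sum_sword_span l : exists a b, [/\ span reach false a, span reach true b &
  \sum_(p <- l) p.1 *: act_sword S T p.2 Om = a + b].
Proof.
elim: l => [|[x w] l [a [b [sa sb eq_ab]]]].
  by exists 0, 0; rewrite big_nil addr0; split=> //; exact: span0.
rewrite big_cons eq_ab /=; have [c /graded_reach[->|rw]] := sword_graded w.
  by exists a, b; rewrite scaler0 add0r.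
case: c rw => rw.
  by exists a, (x *: act_sword S T w Om + b); rewrite addrCA; split=> //; apply: span_step.
by exists (x *: act_sword S T w Om + a), b; rewrite addrA; split=> //; apply: span_step.
Qed.

Hypothesis cycOm : cyclic_vec S T Om.

Lemma span_reach_dense z (r : R) : 0 < r ->
  exists a b, [/\ span reach false a, span reach true b & sqnorm (z - (a + b)) < r].
Proof.
move=> r_gt0; have [l close] := proj1 (cyclic_vec_sqnorm S T Om) cycOm z r r_gt0.
by have [a [b [sa sb eq_ab]]] := sum_sword_span l; exists a, b; rewrite -eq_ab.
Qed.

Lemma isP_psi12_odd : odd (n1 J) -> isP (pword false (k + k)) pS pT.
Proof.
move=> odd_J; have k2_gt0 : (0 < k + k)%N by rewrite addn_gt0 J_gt0.
have cyc2k : cyc false (k + k) = seed false.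
  by rewrite cyc_addk odd_J -[X in cyc _ X]add0n cyc_addk odd_J cyc0.
have [seed1 act_pword orth_pword] := pword_orbit k2_gt0 cyc2k (fun m n => orth_cyc_odd odd_J).
split; first exact: is_rep_psi12.
exists Om; split=> //.
apply/cyclic_vec_sqnorm => z r r_gt0.
have [a [b [sa sb close]]] := span_reach_dense z r_gt0.
have /span_reach_sum[l eq_ab] : span reach false (1 *: a + b).
  by apply: spanZD sa (span_reach_true_false odd_J sb).
by exists l; rewrite -eq_ab scale1r.
Qed.

Section EvenCase.
Hypothesis even : ~~ odd (n1 J).

Lemma par_mod m : par m = par (m %% k).
Proof.
rewrite {1}(divn_eq m k) addnC; elim: (m %/ k)%N => [|q IH]; first by rewrite addn0.
by rewrite mulSn addnCA addnC par_addk (negbTE even) addbF.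
Qed.

Lemma hip_ev_par m m' : par m != par m' -> hip (ev m) (ev m') = 0.
Proof.
rewrite par_mod [par m']par_mod hip_ev.
by have [->|] := eqVneq (m %% k)%N (m' %% k)%N; rewrite ?eqxx.
Qed.

Lemma hip_wvec_grade n I I' m m' : (size I + size I' <= n)%N ->
  grade I m != grade I' m' -> hip (wvec I m) (wvec I' m') = 0.
Proof.
elim: n I I' m m' => [|n IH] [|a I] [|b I'] m m' //= size_le.
1, 2: by rewrite /grade /n1 big_nil; apply: hip_ev_par.
- rewrite ev_step hip_SS grade_nil !grade_cons.
  have [<- neq|//] := eqVneq (letter m) b.
  by apply: (IH [::]); [rewrite /=; lia | apply: contra neq => /eqP ->].
- rewrite [ev m']ev_step hip_SS [grade [::] m']grade_nil !grade_cons.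
  have [-> neq|//] := eqVneq a (letter m').
  by apply: (IH _ [::]); [rewrite /=; lia | apply: contra neq => /eqP ->].
- rewrite hip_SS !grade_cons; have [-> neq|//] := eqVneq a b.
  by apply: IH; [rewrite /=; lia | apply: contra neq => /eqP ->].
Qed.

Lemma reach_orth c u v : reach c u -> reach (~~ c) v -> hip u v = 0.
Proof.
case/reach_graded=> [->|[I [m [-> grade_u]]]]; first by rewrite hip0l.
case/reach_graded=> [->|[I' [m' [-> grade_v]]]]; first by rewrite hip0r.
by apply: (hip_wvec_grade (leqnn _)); rewrite grade_u grade_v; case: c {grade_u grade_v}.
Qed.

Definition orthc_csub c : closed_subspace H :=
  ClosedSubspace (@orthc0 _ _ reach c) (@orthcZD _ _ reach c) (@orthc_closed _ _ reach c).

Lemma orthc_pS c i x : orthc_csub c x -> orthc_csub c (pS i x).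
Proof. by move=> xc v rv; rewrite (adjS (is_rep_psi12 rep)) xc //; apply: reach_pT. Qed.

Lemma orthc_pT c i x : orthc_csub c x -> orthc_csub c (pT i x).
Proof. by move=> xc v rv; rewrite (adjT (is_rep_psi12 rep)) xc //; apply: reach_pS. Qed.

Lemma isP_psi12_sub c : isP (pword c k) (subS (@orthc_pS c)) (subT (@orthc_pT c)).
Proof.
have cyck : cyc c k = seed c.
  by rewrite -[k]add0n cyc_addk (negbTE even) addbF cyc0.
have [seed1 act_pword orth_pword] :=
  pword_orbit J_gt0 cyck (fun m n => orth_cyc_even c even).
have seed_orthc : orthc_csub c (seed c) by move=> v; apply: reach_orth; exists [::].
apply: (isP_sub (is_rep_psi12 rep) _ _ seed_orthc seed1 act_pword orth_pword).
move=> x xc r r_gt0; have [a sa close] := span_approx reach_orth span_reach_dense xc r_gt0.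
by have [l eq_a] := span_reach_sum sa; exists l; rewrite -eq_a.
Qed.

Lemma psi12_equiv_sum :
  unit_equiv_sum pS (subS (@orthc_pS false)) (subS (@orthc_pS true)).
Proof.
exists val, val; split; split=> //.
  move=> x y.
  exact (orthc_orth reach_orth span_reach_dense (subspace_valP x) (subspace_valP y)).
move=> z; have [x [y [xc yc <-]]] := orthc_decomp reach_orth span_reach_dense z.
by exists (subspace_elt (P := orthc_csub false) xc), (subspace_elt (P := orthc_csub true) yc).
Qed.

End EvenCase.

End PsiOfP.

Theorem proposition4p1 (R : realType) (J : seq 'I_2) (H : hilbert R)
    (S T : 'I_2 -> H -> H) :
  (0 < size J)%N -> isP J S T ->
  (~~ odd (n1 J) ->
     exists (J1 J2 : seq 'I_2) (H1 H2 : hilbert R)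
            (S1 T1 : 'I_2 -> H1 -> H1) (S2 T2 : 'I_2 -> H2 -> H2),
       [/\ (0 < size J1)%N, (0 < size J2)%N, isP J1 S1 T1, isP J2 S2 T2 &
           unit_equiv_sum (psi12S S T) S1 S2]) /\
  (odd (n1 J) ->
     exists (J3 : seq 'I_2) (H3 : hilbert R) (S3 T3 : 'I_2 -> H3 -> H3),
       [/\ (0 < size J3)%N, isP J3 S3 T3 & unit_equiv (psi12S S T) S3]).
Proof.
move=> J_gt0 [rep [Om [_ cycOm JOm orthJ]]]; split=> [even | odd_J].
  exists (pword J false (size J)), (pword J true (size J)); do 6 eexists.
  split; rewrite ?size_mkseq //.
  - exact: (isP_psi12_sub rep J_gt0 JOm orthJ cycOm even false).
  - exact: (isP_psi12_sub rep J_gt0 JOm orthJ cycOm even true).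
  - exact: (psi12_equiv_sum rep J_gt0 JOm orthJ cycOm even).
exists (pword J false (size J + size J)), H, (psi12S S T), (psi12T S T); split.
- by rewrite size_mkseq addn_gt0 J_gt0.
- exact: (isP_psi12_odd rep J_gt0 JOm orthJ cycOm odd_J).
- by exists id; split=> // z; exists z.
Qed.
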